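(* Let $T=\{0,\dots,N\}$, and let $M'_\bullet, M''_\bullet\subseteq M_\bullet$ be filtrations of finite-dimensional vector spaces over a field $\mathbb{F}$ indexed by $T$ (i.e. $M'_t,M''_t\subseteq M_t$ for all $t$). Let $\mathfrak{M}'$ and $\mathfrak{M}''$ be filtration compatible bases for $M'_\bullet$ and $M''_\bullet$ respectively, such that $\mathfrak{M}'\cup\mathfrak{M}''$ is linearly independent. Then $\mathfrak{M}'\cap\mathfrak{M}''$ is a filtration compatible basis for the filtration $M'_\bullet\cap M''_\bullet$ given by $(M'_\bullet\cap M''_\bullet)_t=M'_t\cap M''_t$. Moreover, for all $m\in\mathfrak{M}'\cap\mathfrak{M}''$, \[ \operatorname{supp}_{M'_\bullet\cap M''_\bullet}(m)=\operatorname{supp}_{M'_\bullet}(m)\cap\operatorname{supp}_{M''_\bullet}(m). \]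
   Context: A filtration of a vector space $M$ indexed by $T=\{0,\dots,N\}$ is a family of subspaces $M_0\subseteq M_1\subseteq\dots\subseteq M_N=M$, with structure maps the inclusions. For $m\in M_N$, its support is $\operatorname{supp}_{M_\bullet}(m)=\{t\in T\mid m\in M_t\}$. A basis $\mathfrak{M}$ of $M_N$ is filtration compatible if $\mathfrak{M}\cap M_t$ is a basis of $M_t$ for every $t\in T$. *)

From HB Require Import structures.
From mathcomp Require Import all_boot all_order all_algebra.
Set Implicit Arguments. Unset Strict Implicit. Unset Printing Implicit Defensive.
Import GRing.Theory.
Local Open Scope ring_scope.

Section Filt.
Variables (F : fieldType) (vT : vectType F) (N : nat).

Definition filtration (M : 'I_N.+1 -> {vspace vT}) : Prop :=
  forall s t : 'I_N.+1, (s <= t)%N -> (M s <= M t)%VS.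

(* The basis B (a duplicate-free list of vectors, i.e. a finite set) is a
   filtration compatible basis of M: it is a basis of M_N and, for every t,
   B ∩ M_t is a basis of M_t. *)
Definition filt_compat_basis (M : 'I_N.+1 -> {vspace vT}) (B : seq vT) : Prop :=
  basis_of (M ord_max) B /\
  forall t : 'I_N.+1, basis_of (M t) [seq x <- B | x \in M t].

Definition supp (M : 'I_N.+1 -> {vspace vT}) (m : vT) : {set 'I_N.+1} :=
  [set t | m \in M t].

Definition filt_cap (M1 M2 : 'I_N.+1 -> {vspace vT}) : 'I_N.+1 -> {vspace vT} :=
  fun t => (M1 t :&: M2 t)%VS.
End Filt.

From HB Require Import structures.
From mathcomp Require Import all_boot all_order all_algebra.
Import GRing.Theory.
Local Open Scope ring_scope.

(* Bases S1 of V1 and S2 of V2 taken from one free family meet in a basis of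
   V1 :&: V2: the common vectors span a subspace of V1 :&: V2, while S1 \ S2
   together with S2 is free and spans V1 + V2, so the dimension formula for
   V1 + V2 and V1 :&: V2 gives dim (V1 :&: V2) = |S1 ∩ S2|.  At each level t,
   B1 ∩ M1_t and B2 ∩ M2_t are such bases inside the free family B1 ∪ B2, and
   their common vectors are those of B1 ∩ B2 lying in M1_t ∩ M2_t. *)

Section BasesFromOneFreeFamily.
Context {F : fieldType} {vT : vectType F} {U : seq vT}.
Hypothesis freeU : free U.

Lemma free_subset (S : seq vT) : uniq S -> {subset S <= U} -> free S.
Proof.
move=> uniqS subSU.
have permS : perm_eq S [seq x <- U | x \in S].
  apply: uniq_perm; rewrite ?filter_uniq ?(free_uniq freeU) // => x.
  by rewrite mem_filter; apply/idP/andP => [xS | [_ //]]; rewrite subSU.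
by rewrite (perm_free permS) filter_free.
Qed.

Lemma basis_of_cap {V1 V2 : {vspace vT}} {S1 S2 : seq vT} :
    {subset S1 <= U} -> {subset S2 <= U} ->
    basis_of V1 S1 -> basis_of V2 S2 ->
  basis_of (V1 :&: V2) [seq x <- S1 | x \in S2].
Proof.
move=> subS1 subS2 basisS1 basisS2.
set I := [seq x <- S1 | x \in S2]; set D := [seq x <- S1 | x \notin S2].
have freeS1 := basis_free basisS1; have freeS2 := basis_free basisS2.
have freeDS2 : free (D ++ S2).
  apply: free_subset.
    rewrite cat_uniq !filter_uniq ?free_uniq // andbT.
    by apply/hasPn => x xS2; rewrite mem_filter xS2.
  by move=> x; rewrite mem_cat mem_filter => /orP[/andP[_ /subS1]|/subS2].
have sumE : (V1 + V2 = <<D ++ S2>>)%VS.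
  rewrite -(span_basis basisS1) -(span_basis basisS2) -span_cat.
  apply: eq_span => x; rewrite !mem_cat mem_filter.
  by case: (x \in S1) (x \in S2) => [] [].
have sizeS1 : size S1 = (size I + size D)%N.
  by rewrite !size_filter -(count_predC (mem S2)).
have dimV1 : \dim V1 = size S1 by rewrite -(span_basis basisS1) (eqnP freeS1).
have dimV2 : \dim V2 = size S2 by rewrite -(span_basis basisS2) (eqnP freeS2).
have := dimv_sum_cap V1 V2.
rewrite sumE (eqnP freeDS2) dimV1 dimV2 sizeS1 size_cat addnC -[in RHS]addnA.
move=> /addIn dimE; rewrite basisEfree filter_free //= dimE leqnn andbT.
apply/span_subvP => x; rewrite mem_filter memv_cap => /andP[xS2 xS1].
by rewrite (basis_mem basisS1) ?(basis_mem basisS2).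
Qed.

End BasesFromOneFreeFamily.

Lemma filter_mem_filter (T : eqType) (p1 p2 : pred T) (s1 s2 : seq T) :
  [seq x <- [seq x <- s1 | x \in s2] | p1 x && p2 x] =
  [seq x <- [seq x <- s1 | p1 x] | x \in [seq x <- s2 | p2 x]].
Proof.
rewrite -!filter_predI; apply: eq_filter => x /=.
by rewrite mem_filter; case: (p1 x) (p2 x) (x \in s2) => [] [] [].
Qed.

Theorem lemma2p6 (F : fieldType) (vT : vectType F) (N : nat)
    (M M1 M2 : 'I_N.+1 -> {vspace vT}) (B1 B2 : seq vT) :
  filtration M -> filtration M1 -> filtration M2 ->
  (forall t, (M1 t <= M t)%VS) -> (forall t, (M2 t <= M t)%VS) ->
  filt_compat_basis M1 B1 -> filt_compat_basis M2 B2 ->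
  free (undup (B1 ++ B2)) ->
  filt_compat_basis (filt_cap M1 M2) [seq x <- B1 | x \in B2] /\
  (forall m, m \in B1 -> m \in B2 ->
     supp (filt_cap M1 M2) m = (supp M1 m :&: supp M2 m)%SET).
Proof.
move=> _ _ _ _ _ [basisB1 basisB1t] [basisB2 basisB2t] freeB12.
have subB1 : {subset B1 <= undup (B1 ++ B2)}.
  by move=> x; rewrite mem_undup mem_cat => ->.
have subB2 : {subset B2 <= undup (B1 ++ B2)}.
  by move=> x; rewrite mem_undup mem_cat orbC => ->.
split; last by move=> m _ _; apply/setP => t; rewrite !inE memv_cap.
split; first exact: (basis_of_cap freeB12 subB1 subB2 basisB1 basisB2).
move=> t; under eq_filter => x do rewrite memv_cap.
rewrite filter_mem_filter.
apply: (basis_of_cap freeB12 _ _ (basisB1t t) (basisB2t t)) => x.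
  by rewrite mem_filter => /andP[_ /subB1].
by rewrite mem_filter => /andP[_ /subB2].
Qed.
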